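(* Let $X$ be a connected finite $T_0$-space and let $x_0,x\in X$ with $x_0\neq x$, such that $x$ is neither a maximal nor a minimal element of $X$. Then the inclusion of simplicial complexes $\mathcal{K}(X\smallsetminus\{x\})\subseteq\mathcal{K}(X)$ induces an epimorphism $i_*:E(\mathcal{K}(X\smallsetminus\{x\}),x_0)\to E(\mathcal{K}(X),x_0)$ of edge-path groups.
   Context: Finite $T_0$-spaces are identified with finite posets via $x\le y$ iff $x$ lies in every open set containing $y$. For a finite poset $P$, $\mathcal{K}(P)$ is the simplicial complex whose simplices are the nonempty chains of $P$. $E(K,v)$ denotes the edge-path group of a simplicial complex $K$ with base vertex $v$. *)

From mathcomp Require Import all_boot.
Set Implicit Arguments. Unset Strict Implicit. Unset Printing Implicit Defensive.

(* A finite T0-space is a finite type T with a partial order [le]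
   (x <= y iff x lies in every open set containing y).  The open sets of the
   corresponding topology are then exactly the down-sets. *)
Definition partial_order (T : finType) (le : rel T) : Prop :=
  [/\ reflexive le, antisymmetric le & transitive le].

Definition is_open (T : finType) (le : rel T) (U : {set T}) : bool :=
  [forall a, forall b, ((b \in U) && le a b) ==> (a \in U)].

Definition connected_space (T : finType) (le : rel T) : Prop :=
  (exists a : T, True) /\
  forall U : {set T}, is_open le U -> is_open le (~: U) -> U = set0 \/ U = setT.

Definition maximal_elt (T : finType) (le : rel T) (a : T) : Prop :=
  forall b, le a b -> b = a.
Definition minimal_elt (T : finType) (le : rel T) (a : T) : Prop :=
  forall b, le b a -> b = a.

Definition complex (V : finType) := {set V} -> bool.

(* K(S): the order complex of the subposet S of (T, le): simplices are the
   nonempty chains contained in S. *)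
Definition order_complex (T : finType) (le : rel T) (S : {set T}) : complex T :=
  fun A => [&& A != set0, A \subset S &
               [forall a in A, forall b in A, le a b || le b a]].

(* An edge path is a nonempty sequence of vertices v0 v1 ... vn such that
   each {v_i, v_(i+1)} is a simplex (v_i = v_(i+1) allowed). *)
Definition edge_path (V : finType) (K : complex V) (p : seq V) : bool :=
  if p is v :: s then K [set v] && path (fun a b => K [set a; b]) v s
  else false.

Definition edge_loop (V : finType) (K : complex V) (v : V) (p : seq V) : bool :=
  if p is u :: s then [&& u == v, last u s == v & edge_path K p] else false.

(* Equivalence of edge paths (Spanier): generated by
   ... u v w ... ~ ... u w ...  whenever {u,v,w} is a simplex,
   and ... u u ... ~ ... u ... . *)
Inductive ep_equiv (V : finType) (K : complex V) : seq V -> seq V -> Prop :=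
| ep_refl p : ep_equiv K p p
| ep_sym p q : ep_equiv K p q -> ep_equiv K q p
| ep_trans p q r : ep_equiv K p q -> ep_equiv K q r -> ep_equiv K p r
| ep_tri p q u v w : K [set u; v; w] ->
    ep_equiv K (p ++ [:: u; v; w] ++ q) (p ++ [:: u; w] ++ q)
| ep_dup p q u : K [set u] ->
    ep_equiv K (p ++ [:: u; u] ++ q) (p ++ [:: u] ++ q).

(* E(K, v) is the set of edge loops at v modulo ep_equiv (a group under
   concatenation).  For a subcomplex L of K the inclusion induces
   i_* : E(L, v) -> E(K, v), [p] |-> [p]; it is an epimorphism iff every
   class of E(K, v) contains a loop of L. *)
Definition incl_edge_group_epi (V : finType) (L K : complex V) (v : V) : Prop :=
  forall p, edge_loop K v p ->
    exists2 q, edge_loop L v q & ep_equiv K p q.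

From mathcomp Require Import all_boot.
Set Implicit Arguments. Unset Strict Implicit. Unset Printing Implicit Defensive.

(* An edge path of K(X) whose ends differ from x is equivalent, with the same
   ends, to one avoiding x; loops at x0 <> x are such paths.  Runs
   x x merge into x.  For a passage v x w with v, w <> x, pick c <> x
   comparable with v, x and w: c = v if x lies between v and w, an element
   above x if v, w <= x, one below x if v, w >= x (here non-maximality and
   non-minimality of x are used).  Then v x w ~ v c x w ~ v c w by two
   triangles {v,c,x} and {c,x,w}. *)

Lemma ep_equiv_cat (V : finType) (K : complex V) p q a b :
  ep_equiv K p q -> ep_equiv K (a ++ p ++ b) (a ++ q ++ b).
Proof.
elim=> {p q} [p | p q _ | p q r _ Hpq _ Hqr | p q u v w Kuvw | p q u Ku].
- exact: ep_refl.
- exact: ep_sym.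
- exact: ep_trans Hpq Hqr.
- by have := ep_tri (a ++ p) (q ++ b) Kuvw; rewrite -!catA.
- by have := ep_dup (a ++ p) (q ++ b) Ku; rewrite -!catA.
Qed.

Lemma ep_equiv_catl (V : finType) (K : complex V) p q a :
  ep_equiv K p q -> ep_equiv K (a ++ p) (a ++ q).
Proof. by move/(ep_equiv_cat a [::]); rewrite !cats0. Qed.

Section OrderComplex.

Variables (T : finType) (le : rel T).
Hypotheses (le_refl : reflexive le) (le_trans : transitive le).

Definition comparable_rel (a b : T) := le a b || le b a.

Lemma order_complex1 (S : {set T}) a : order_complex le S [set a] = (a \in S).
Proof.
apply/and3P/idP => [[_ /subsetP-> //] | aS]; first by rewrite set11.
split; first by apply/set0Pn; exists a; rewrite set11.
  by rewrite sub1set.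
apply/forall_inP=> b /set1P->; apply/forall_inP=> c /set1P->.
by rewrite le_refl.
Qed.

Lemma order_complex2 (S : {set T}) a b :
  order_complex le S [set a; b] = [&& a \in S, b \in S & comparable_rel a b].
Proof.
have [Ha Hb] : a \in [set a; b] /\ b \in [set a; b] by rewrite !inE !eqxx orbT.
apply/and3P/and3P => [[_ /subsetP sub /forall_inP chain] | [aS bS ab]].
  by split; [exact: sub | exact: sub | move/forall_inP: (chain a Ha); apply].
split; first by apply/set0Pn; exists a.
  by apply/subsetP=> c; rewrite !inE => /orP[]/eqP->.
apply/forallP=> c; apply/implyP; rewrite !inE => /orP[]/eqP->;
  apply/forallP=> d; apply/implyP; rewrite !inE => /orP[]/eqP->;
  by rewrite ?le_refl // orbC.
Qed.

Lemma order_complex3 (S : {set T}) a b c :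
  a \in S -> b \in S -> c \in S ->
  comparable_rel a b -> comparable_rel b c -> comparable_rel a c ->
  order_complex le S [set a; b; c].
Proof.
move=> aS bS cS ab bc ac; apply/and3P; split.
- by apply/set0Pn; exists a; rewrite !inE eqxx.
- by apply/subsetP=> d; rewrite !inE => /orP[/orP[]|]/eqP->.
apply/forallP=> d; apply/implyP; rewrite !inE => /orP[/orP[]|]/eqP->;
  apply/forallP=> e; apply/implyP; rewrite !inE => /orP[/orP[]|]/eqP->;
  by rewrite ?le_refl // orbC.
Qed.

Lemma edge_path_order_complex1 (S : {set T}) v :
  edge_path (order_complex le S) [:: v] = (v \in S).
Proof. by rewrite /= order_complex1 andbT. Qed.

Lemma edge_path_order_complex_cons (S : {set T}) v a s :
  edge_path (order_complex le S) [:: v, a & s] =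
  [&& v \in S, comparable_rel v a & edge_path (order_complex le S) (a :: s)].
Proof.
rewrite /= !order_complex1 order_complex2.
by case: (v \in S); case: (a \in S); rewrite ?andbF.
Qed.

Notation KX := (order_complex le setT).

Lemma ep_equiv_detour v x w c :
  comparable_rel v x -> comparable_rel x w ->
  comparable_rel v c -> comparable_rel c x -> comparable_rel c w ->
  ep_equiv KX [:: v; x; w] [:: v; c; w].
Proof.
move=> vx xw vc cx cw; apply: (@ep_trans _ _ _ [:: v; c; x; w]).
  apply: ep_sym; apply: (ep_tri [::] [:: w]).
  by apply: order_complex3; rewrite ?inE.
by apply: (ep_tri [:: v] [::]); apply: order_complex3; rewrite ?inE.
Qed.

Variables (x y z : T).
Hypotheses (le_xy : le x y) (y_neq_x : y != x) (le_zx : le z x) (z_neq_x : z != x).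

Lemma exists_detour_vertex v w : v != x -> comparable_rel v x -> comparable_rel x w ->
  exists c, [/\ c != x, comparable_rel v c, comparable_rel c x & comparable_rel c w].
Proof.
move=> v_neq_x vx xw; move: (vx) (xw).
rewrite /comparable_rel => /orP[le_vx | le_xv] /orP[le_xw | le_wx].
- by exists v; rewrite le_refl le_vx (le_trans le_vx le_xw).
- exists y; rewrite le_xy (le_trans le_vx le_xy) (le_trans le_wx le_xy).
  by rewrite !orbT.
- exists z; rewrite le_zx (le_trans le_zx le_xv) (le_trans le_zx le_xw).
  by rewrite !orbT.
- by exists v; rewrite le_refl le_xv (le_trans le_wx le_xv) !orbT.
Qed.

Lemma edge_path_avoid s v : v != x -> last v s != x -> edge_path KX (v :: s) ->
  exists t, [/\ edge_path (order_complex le (setT :\ x)) (v :: t),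
                last v t = last v s & ep_equiv KX (v :: s) (v :: t)].
Proof.
move: {2}(size s) (leqnn (size s)) => n; elim: n s v => [|n IH] [|a s] v //.
1,2: move=> _ v_neq_x _ _; exists [::]; split=> //; last exact: ep_refl.
1,2: by rewrite edge_path_order_complex1 !inE v_neq_x.
rewrite ltnS => size_s v_neq_x last_neq_x.
rewrite edge_path_order_complex_cons inE => /and3P[_ va path_as].
have [a_eq_x | a_neq_x] := eqVneq a x; last first.
  have [t [path_at last_t eq_t]] := IH s a size_s a_neq_x last_neq_x path_as.
  exists (a :: t); split => //; last exact: (ep_equiv_catl [:: v] eq_t).
  by rewrite edge_path_order_complex_cons !inE v_neq_x va path_at.
subst a; case: s size_s last_neq_x path_as => [|b s] size_s last_neq_x path_xs.
  by rewrite /= eqxx in last_neq_x.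
move: path_xs; rewrite edge_path_order_complex_cons inE => /and3P[_ xb path_bs].
have [b_eq_x | b_neq_x] := eqVneq b x.
  subst b.
  have path_vxs : edge_path KX [:: v, x & s].
    by rewrite edge_path_order_complex_cons inE va path_bs.
  have [t [path_vt last_t eq_t]] := IH (x :: s) v size_s v_neq_x last_neq_x path_vxs.
  exists t; split => //; apply: ep_trans eq_t.
  by apply: (ep_dup [:: v] s); rewrite order_complex1 inE.
have [t [path_bt last_t eq_t]] := IH s b (ltnW size_s) b_neq_x last_neq_x path_bs.
have [c [c_neq_x vc cx cb]] := exists_detour_vertex v_neq_x va xb.
exists (c :: b :: t); split => //.
  by rewrite !edge_path_order_complex_cons !inE v_neq_x c_neq_x vc cb path_bt.
apply: (@ep_trans _ _ _ [:: v, c, b & s]).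
  exact: (ep_equiv_cat [::] s (ep_equiv_detour va xb vc cx cb)).
exact: (ep_equiv_catl [:: v; c] eq_t).
Qed.

End OrderComplex.

Lemma not_maximal_elt_above (T : finType) (le : rel T) a :
  ~ maximal_elt le a -> exists2 b, le a b & b != a.
Proof.
move=> not_max; have [b /andP[le_ab b_neq_a] | none] := pickP (fun b => le a b && (b != a)).
  by exists b.
case: not_max => b le_ab; apply/eqP.
by move: (none b); rewrite le_ab => /negbFE.
Qed.

Theorem mainTheorem13 (T : finType) (le : rel T)
  (hpo : partial_order le) (hconn : connected_space le)
  (x0 x : T) (hne : x0 != x)
  (hnmax : ~ maximal_elt le x) (hnmin : ~ minimal_elt le x) :
  incl_edge_group_epi (order_complex le (setT :\ x)) (order_complex le setT) x0.
Proof.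
case: hpo => le_refl _ le_trans.
have [y le_xy y_neq_x] := not_maximal_elt_above hnmax.
have [z le_zx z_neq_x] := not_maximal_elt_above (le := fun a b => le b a) hnmin.
move=> [//|u s] /and3P[/eqP u_x0 /eqP last_s path_s]; subst u.
have [|t [path_t last_t eq_t]] :=
  edge_path_avoid le_refl le_trans le_xy y_neq_x le_zx z_neq_x hne _ path_s.
  by rewrite last_s.
by exists (x0 :: t); rewrite //= eqxx last_t last_s eqxx.
Qed.
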